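(* Let $T>0$ and let $\pi=(\pi^n)_{n\geq 1}$ be a sequence of partitions $\pi^n=(0=t^n_0<t^n_1<\cdots<t^n_{N(\pi^n)}=T)$ of $[0,T]$ with vanishing mesh, i.e. $|\pi^n|\to 0$. Then: (i) $\pi$ is balanced if and only if $\liminf_{n\to\infty} N(\pi^n)\,\underline{\pi^n}>0$ and $\limsup_{n\to\infty} N(\pi^n)\,|\pi^n|<\infty$. (ii) For $0\le t_1\le t_2\le T$ let $N(\pi^n,t_1,t_2)$ denote the number of partition points of $\pi^n$ in $[t_1,t_2]$. If $\pi$ is balanced, then for any $h\in(0,T]$, $$\limsup_{n\to\infty}\frac{\sup_{t\in[0,T-h]}N(\pi^n,t,t+h)}{\inf_{t\in[0,T-h]}N(\pi^n,t,t+h)}<\infty.$$ (iii) If $\pi$ is balanced, then $$\limsup_n\frac{N(\pi^{n+1})}{N(\pi^n)}<\infty\iff\limsup_n\frac{|\pi^n|}{|\pi^{n+1}|}<\infty\iff\limsup_n\frac{\underline{\pi^n}}{\underline{\pi^{n+1}}}<\infty.$$ (iv) If $g\in C^1([0,T],\mathbb{R})$ is strictly increasing with $\inf_{[0,T]} g'>0$, then for any balanced partition sequence $(\pi^n)_{n\ge1}$ of $[0,T]$, the sequence $(g(\pi^n))_{n\geq1}$, where $g(\pi^n)=(g(t^n_0)<g(t^n_1)<\cdots<g(t^n_{N(\pi^n)}))$, is a balanced partition sequence of $g([0,T])=[g(0),g(T)]$.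
   Context: For a finite partition $\pi^n=(0=t^n_0<t^n_1<\cdots<t^n_{N(\pi^n)}=T)$ of $[0,T]$, $N(\pi^n)$ is the number of intervals, $|\pi^n|=\sup_{i}|t^n_{i}-t^n_{i-1}|$ is the largest interval length (mesh) and $\underline{\pi^n}=\inf_i|t^n_i-t^n_{i-1}|$ the smallest interval length. A sequence of partitions $(\pi^n)_{n\geq1}$ of an interval is called balanced if there exists $c>0$ such that $|\pi^n|/\underline{\pi^n}\le c$ for all $n\ge1$. *)

From Stdlib Require Import Reals List.
From Coquelicot Require Import Coquelicot.
Import ListNotations.
Open Scope R_scope.

(* A finite partition of [a,b]: N intervals, points t 0 < t 1 < ... < t N,
   t 0 = a, t N = b (only the values t 0 .. t N are relevant). *)
Definition is_partition (a b : R) (N : nat) (t : nat -> R) : Prop :=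
  (0 < N)%nat /\ t 0%nat = a /\ t N = b /\
  (forall i : nat, (i < N)%nat -> t i < t (S i)).

Definition mesh (N : nat) (t : nat -> R) : R :=
  fold_right Rmax 0 (map (fun i => t (S i) - t i) (seq 0 N)).

Definition minstep (N : nat) (t : nat -> R) : R :=
  fold_right Rmin (t 1%nat - t 0%nat) (map (fun i => t (S i) - t i) (seq 0 N)).

Definition balanced (N : nat -> nat) (t : nat -> nat -> R) : Prop :=
  exists c : R, c > 0 /\ forall n : nat, mesh (N n) (t n) / minstep (N n) (t n) <= c.

Definition npoints (N : nat) (t : nat -> R) (t1 t2 : R) : nat :=
  length (filter (fun i => if Rle_dec t1 (t i) then
                             if Rle_dec (t i) t2 then true else false
                           else false) (seq 0 (S N))).

(* sup / inf over s in [0, T-h] of N(pi, s, s+h) (finite: bounded by N+1) *)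
Definition sup_window (T h : R) (N : nat) (t : nat -> R) : R :=
  real (Lub_Rbar (fun x => exists s, 0 <= s <= T - h /\ x = INR (npoints N t s (s + h)))).
Definition inf_window (T h : R) (N : nat) (t : nat -> R) : R :=
  real (Glb_Rbar (fun x => exists s, 0 <= s <= T - h /\ x = INR (npoints N t s (s + h)))).

Definition C1_on_with (a b : R) (g g' : R -> R) : Prop :=
  (forall x, a <= x <= b ->
     filterlim (fun y => (g y - g x) / (y - x))
       (within (fun y => a <= y <= b /\ y <> x) (locally x)) (locally (g' x))) /\
  (forall x, a <= x <= b ->
     filterlim g' (within (fun y => a <= y <= b) (locally x)) (locally (g' x))).

From Stdlib Require Import Reals List Lra Lia.
From Coquelicot Require Import Coquelicot.
Open Scope R_scope.

(* Summing the gaps gives N minstep <= T <= N mesh, and a balanced sequence has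
   mesh <= c minstep, so N mesh and N minstep both stay within [T / c, c T]; this
   yields (i) and, comparing consecutive indices, (iii).  A window of length h
   contains at most h / minstep + 1 and at least h / mesh - 1 partition points,
   which gives (ii) as soon as mesh <= h / 2.  For (iv), the mean value theorem
   puts every gap of g(pi^n) between inf g' and max g' times the corresponding
   gap of pi^n, and such bi-Lipschitz images of balanced sequences are balanced. *)

Lemma fold_right_Rmax_ge l d x : In x l -> x <= fold_right Rmax d l.
Proof.
  induction l as [|y l IH]; simpl; [tauto|].
  intros [<-|Hx]; [apply Rmax_l|].
  apply Rle_trans with (fold_right Rmax d l); [exact (IH Hx)|apply Rmax_r].
Qed.

Lemma fold_right_Rmax_le l d B :
  d <= B -> (forall x, In x l -> x <= B) -> fold_right Rmax d l <= B.
Proof.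
  induction l as [|y l IH]; simpl; intros Hd Hl; [exact Hd|].
  apply Rmax_lub; [apply Hl; left; reflexivity|apply IH; auto].
Qed.

Lemma fold_right_Rmin_le l d x : In x l -> fold_right Rmin d l <= x.
Proof.
  induction l as [|y l IH]; simpl; [tauto|].
  intros [<-|Hx]; [apply Rmin_l|].
  apply Rle_trans with (fold_right Rmin d l); [apply Rmin_r|exact (IH Hx)].
Qed.

Lemma fold_right_Rmin_ge l d B :
  B <= d -> (forall x, In x l -> B <= x) -> B <= fold_right Rmin d l.
Proof.
  induction l as [|y l IH]; simpl; intros Hd Hl; [exact Hd|].
  apply Rmin_glb; [apply Hl; left; reflexivity|apply IH; auto].
Qed.

Lemma fold_right_Rmin_gt l d B :
  B < d -> (forall x, In x l -> B < x) -> B < fold_right Rmin d l.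
Proof.
  induction l as [|y l IH]; simpl; intros Hd Hl; [exact Hd|].
  apply Rmin_glb_lt; [apply Hl; left; reflexivity|apply IH; auto].
Qed.

Lemma in_gaps N (t : nat -> R) x :
  In x (map (fun i => t (S i) - t i) (seq 0 N)) <->
  exists i, (i < N)%nat /\ x = t (S i) - t i.
Proof.
  rewrite in_map_iff. split.
  - intros [i [<- Hi]]. apply in_seq in Hi. exists i. split; [lia|reflexivity].
  - intros [i [Hi ->]]. exists i. split; [reflexivity|apply in_seq; lia].
Qed.

Lemma gap_le_mesh N t i : (i < N)%nat -> t (S i) - t i <= mesh N t.
Proof. intros Hi. apply fold_right_Rmax_ge, in_gaps. exists i. auto. Qed.

Lemma minstep_le_gap N t i : (i < N)%nat -> minstep N t <= t (S i) - t i.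
Proof. intros Hi. apply fold_right_Rmin_le, in_gaps. exists i. auto. Qed.

Section Partition.
Context {a b : R} {N : nat} {t : nat -> R}.
Hypothesis Hp : is_partition a b N t.

Lemma minstep_pos : 0 < minstep N t.
Proof.
  destruct Hp as (HN & _ & _ & Hinc).
  apply fold_right_Rmin_gt; [specialize (Hinc 0%nat HN); lra|].
  intros x Hx. apply in_gaps in Hx as [i [Hi ->]]. specialize (Hinc i Hi). lra.
Qed.

Lemma minstep_le_mesh : minstep N t <= mesh N t.
Proof.
  destruct Hp as (HN & _).
  apply Rle_trans with (t 1%nat - t 0%nat); [apply minstep_le_gap|apply gap_le_mesh]; exact HN.
Qed.

Lemma mesh_pos : 0 < mesh N t.
Proof. pose proof minstep_pos. pose proof minstep_le_mesh. lra. Qed.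

Lemma partition_le i j : (i <= j <= N)%nat -> t i <= t j.
Proof.
  induction j as [|j IH]; intros Hij.
  - replace i with 0%nat by lia. lra.
  - destruct (Nat.eq_dec i (S j)) as [->|Hne]; [lra|].
    destruct Hp as (_ & _ & _ & Hinc). specialize (Hinc j ltac:(lia)).
    specialize (IH ltac:(lia)). lra.
Qed.

Lemma partition_point_bounds i : (i <= N)%nat -> a <= t i <= b.
Proof.
  intros Hi. pose proof (partition_le 0 i ltac:(lia)) as Hlo.
  pose proof (partition_le i N ltac:(lia)) as Hhi.
  destruct Hp as (_ & H0 & HN & _). lra.
Qed.

Lemma partition_increment_bounds k : (k <= N)%nat ->
  INR k * minstep N t <= t k - t 0%nat <= INR k * mesh N t.
Proof.
  induction k as [|k IH]; intros Hk; [simpl; lra|].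
  rewrite S_INR. specialize (IH ltac:(lia)).
  pose proof (minstep_le_gap N t k ltac:(lia)). pose proof (gap_le_mesh N t k ltac:(lia)). lra.
Qed.

Lemma partition_length_bounds : INR N * minstep N t <= b - a <= INR N * mesh N t.
Proof.
  pose proof (partition_increment_bounds N (le_n N)) as H.
  destruct Hp as (_ & H0 & HN & _). rewrite H0, HN in H. exact H.
Qed.

Lemma mesh_le_scal (s : nat -> R) M : 0 <= M ->
  (forall i, (i < N)%nat -> s (S i) - s i <= M * (t (S i) - t i)) ->
  mesh N s <= M * mesh N t.
Proof.
  intros HM Hs. pose proof mesh_pos. apply fold_right_Rmax_le; [nra|].
  intros x Hx. apply in_gaps in Hx as [i [Hi ->]].
  pose proof (gap_le_mesh N t i Hi). specialize (Hs i Hi). nra.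
Qed.

Lemma minstep_ge_scal (s : nat -> R) m : 0 <= m ->
  (forall i, (i < N)%nat -> m * (t (S i) - t i) <= s (S i) - s i) ->
  m * minstep N t <= minstep N s.
Proof.
  intros Hm Hs. destruct Hp as (HN & _). apply fold_right_Rmin_ge.
  - pose proof (minstep_le_gap N t 0 HN). specialize (Hs 0%nat HN). nra.
  - intros x Hx. apply in_gaps in Hx as [i [Hi ->]].
    pose proof (minstep_le_gap N t i Hi). specialize (Hs i Hi). nra.
Qed.

Lemma is_partition_image (g : R -> R) :
  (forall x y, a <= x <= b -> a <= y <= b -> x < y -> g x < g y) ->
  is_partition (g a) (g b) N (fun i => g (t i)).
Proof.
  intros Hg. pose proof partition_point_bounds as Hin.
  destruct Hp as (HN & H0 & HN' & Hinc).
  split; [exact HN|]. split; [rewrite H0; reflexivity|]. split; [rewrite HN'; reflexivity|].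
  intros i Hi. apply Hg; [apply Hin; lia|apply Hin; lia|apply Hinc, Hi].
Qed.

End Partition.

Definition in_window (t : nat -> R) (a b : R) (i : nat) : bool :=
  if Rle_dec a (t i) then if Rle_dec (t i) b then true else false else false.

(* [npoints N t a b] is [count_window t a b 0 (S N)] by conversion. *)
Definition count_window (t : nat -> R) (a b : R) (k n : nat) : nat :=
  length (filter (in_window t a b) (seq k n)).

Lemma in_window_spec t a b i : in_window t a b i = true <-> a <= t i <= b.
Proof.
  unfold in_window. destruct (Rle_dec a (t i)), (Rle_dec (t i) b);
    split; intros H; try discriminate; try reflexivity; lra.
Qed.

Lemma count_window_S t a b k n : count_window t a b k (S n) =
  ((if in_window t a b k then 1 else 0) + count_window t a b (S k) n)%nat.
Proof. unfold count_window. simpl. destruct (in_window t a b k); reflexivity. Qed.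

Lemma count_window_left_ext t a a' b k n :
  (forall i, (k <= i < k + n)%nat -> a <= t i /\ a' <= t i) ->
  count_window t a b k n = count_window t a' b k n.
Proof.
  intros H. unfold count_window. f_equal. apply filter_ext_in.
  intros i Hi. apply in_seq in Hi. specialize (H i Hi).
  unfold in_window. destruct (Rle_dec a (t i)), (Rle_dec a' (t i)); auto; lra.
Qed.

Section Windows.
Context {a0 b0 : R} {N : nat} {t : nat -> R}.
Hypothesis Hp : is_partition a0 b0 N t.

Lemma count_window_upper n : forall k a b, (k + n <= S N)%nat ->
  (1 <= count_window t a b k n)%nat ->
  (INR (count_window t a b k n) - 1) * minstep N t <= b - a.
Proof.
  pose proof (minstep_pos Hp) as Hm.
  induction n as [|n IH]; intros k a b Hk Hc; [unfold count_window in Hc; simpl in Hc; lia|].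
  rewrite count_window_S in *. destruct (in_window t a b k) eqn:Ek; simpl in *; [|apply IH; lia].
  apply in_window_spec in Ek.
  (* past index k every point is >= t k + minstep >= a + minstep, so the window may start there *)
  assert (Hshift : count_window t a b (S k) n = count_window t (a + minstep N t) b (S k) n).
  { apply count_window_left_ext. intros i Hi.
    pose proof (partition_le Hp (S k) i ltac:(lia)).
    pose proof (minstep_le_gap N t k ltac:(lia)). lra. }
  destruct (count_window t a b (S k) n) as [|c] eqn:Ec; [simpl; lra|].
  specialize (IH (S k) (a + minstep N t) b ltac:(lia)).
  rewrite <- Hshift in IH. specialize (IH ltac:(lia)).
  rewrite S_INR in *. lra.
Qed.

Lemma count_window_from_point n : forall k b, (k + n <= N)%nat -> t k <= b <= t (k + n)%nat ->
  b - t k <= INR (count_window t (t k) b k (S n)) * mesh N t.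
Proof.
  pose proof (mesh_pos Hp) as HM.
  induction n as [|n IH]; intros k b Hk Hb.
  - rewrite Nat.add_0_r in Hb. pose proof (pos_INR (count_window t (t k) b k 1)). nra.
  - rewrite count_window_S, (proj2 (in_window_spec t (t k) b k)) by lra.
    pose proof (gap_le_mesh N t k ltac:(lia)) as Hg.
    pose proof (pos_INR (count_window t (t k) b (S k) (S n))) as Hc.
    rewrite plus_INR. simpl (INR 1).
    destruct (Rlt_dec b (t (S k))) as [Hlt|Hge]; [nra|].
    replace (k + S n)%nat with (S k + n)%nat in Hb by lia.
    specialize (IH (S k) b ltac:(lia) ltac:(lra)).
    rewrite (count_window_left_ext t (t k) (t (S k))); [lra|].
    intros i Hi. pose proof (partition_le Hp (S k) i ltac:(lia)).
    pose proof (minstep_le_gap N t k ltac:(lia)). pose proof (minstep_pos Hp). lra.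
Qed.

Lemma count_window_lower n : forall k a b, (k + n <= N)%nat ->
  t k <= a <= b -> b <= t (k + n)%nat ->
  b - a <= (INR (count_window t a b k (S n)) + 1) * mesh N t.
Proof.
  pose proof (mesh_pos Hp) as HM.
  induction n as [|n IH]; intros k a b Hk Hab Hb.
  - rewrite Nat.add_0_r in Hb. pose proof (pos_INR (count_window t a b k 1)). nra.
  - rewrite count_window_S, plus_INR.
    pose proof (pos_INR (if in_window t a b k then 1 else 0)) as H1.
    pose proof (pos_INR (count_window t a b (S k) (S n))) as Hc.
    pose proof (gap_le_mesh N t k ltac:(lia)) as Hg.
    replace (k + S n)%nat with (S k + n)%nat in Hb by lia.
    destruct (Rle_dec (t (S k)) a) as [Hle|Hlt].
    + specialize (IH (S k) a b ltac:(lia) ltac:(lra) Hb). nra.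
    + destruct (Rlt_dec b (t (S k))) as [Hb2|Hb2]; [nra|].
      (* [a < t (S k) <= b]: split the window at the partition point [t (S k)] *)
      pose proof (count_window_from_point n (S k) b ltac:(lia) ltac:(lra)) as HE.
      rewrite <- (count_window_left_ext t a (t (S k))) in HE; [nra|].
      intros i Hi. pose proof (partition_le Hp (S k) i ltac:(lia)). lra.
Qed.

Lemma npoints_upper a b : a <= b -> (INR (npoints N t a b) - 1) * minstep N t <= b - a.
Proof.
  intros Hab. change (npoints N t a b) with (count_window t a b 0 (S N)).
  destruct (count_window t a b 0 (S N)) as [|c] eqn:Ec.
  - pose proof (minstep_pos Hp). simpl. lra.
  - rewrite <- Ec. apply count_window_upper; lia.
Qed.

Lemma npoints_lower a b : a0 <= a <= b -> b <= b0 ->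
  b - a <= (INR (npoints N t a b) + 1) * mesh N t.
Proof.
  intros Hab Hb. change (npoints N t a b) with (count_window t a b 0 (S N)).
  destruct Hp as (_ & H0 & HN & _).
  apply count_window_lower; [lia|rewrite H0; lra|rewrite Nat.add_0_l, HN; lra].
Qed.

End Windows.

Lemma sup_window_le T h N t : is_partition 0 T N t -> 0 < h <= T ->
  sup_window T h N t <= h / minstep N t + 1.
Proof.
  intros Hp Hh. unfold sup_window.
  set (E := fun x => exists s, 0 <= s <= T - h /\ x = INR (npoints N t s (s + h))).
  destruct (Lub_Rbar_correct E) as [Hub Hlub].
  assert (HE : E (INR (npoints N t 0 (0 + h)))) by (exists 0; split; [lra|reflexivity]).
  assert (Hb : is_ub_Rbar E (h / minstep N t + 1)).
  { intros x [s [Hs ->]]. simpl. pose proof (minstep_pos Hp).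
    pose proof (npoints_upper Hp s (s + h) ltac:(lra)).
    cut (INR (npoints N t s (s + h)) - 1 <= h / minstep N t); [lra|].
    apply Rle_div_r; lra. }
  specialize (Hlub _ Hb). specialize (Hub _ HE).
  destruct (Lub_Rbar E); simpl in *; try contradiction; lra.
Qed.

Lemma inf_window_ge T h N t : is_partition 0 T N t -> 0 < h <= T ->
  h / mesh N t - 1 <= inf_window T h N t.
Proof.
  intros Hp Hh. unfold inf_window.
  set (E := fun x => exists s, 0 <= s <= T - h /\ x = INR (npoints N t s (s + h))).
  destruct (Glb_Rbar_correct E) as [Hlb Hglb].
  assert (HE : E (INR (npoints N t 0 (0 + h)))) by (exists 0; split; [lra|reflexivity]).
  assert (Hb : is_lb_Rbar E (h / mesh N t - 1)).
  { intros x [s [Hs ->]]. simpl. pose proof (mesh_pos Hp).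
    pose proof (npoints_lower Hp s (s + h) ltac:(lra) ltac:(lra)).
    cut (h / mesh N t <= INR (npoints N t s (s + h)) + 1); [lra|].
    apply Rle_div_l; lra. }
  specialize (Hglb _ Hb). specialize (Hlb _ HE).
  destruct (Glb_Rbar E); simpl in *; try contradiction; lra.
Qed.

Lemma LimSup_lt_p_infty_iff (u : nat -> R) :
  Rbar_lt (LimSup_seq u) p_infty <-> exists M, eventually (fun n => u n <= M).
Proof.
  split.
  - destruct (ex_LimSup_seq u) as [l Hl]. rewrite (is_LimSup_seq_unique _ _ Hl).
    destruct l as [l| |]; simpl; intros H; try contradiction.
    + destruct (Hl (mkposreal 1 Rlt_0_1)) as [_ [n0 Hn0]]. exists (l + 1), n0.
      intros n Hn. specialize (Hn0 n Hn). simpl in Hn0. lra.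
    + destruct (Hl 0) as [n0 Hn0]. exists 0, n0. intros n Hn. specialize (Hn0 n Hn). lra.
  - intros [M HM]. pose proof (LimSup_le u (fun _ => M) HM) as H.
    rewrite LimSup_seq_const in H. destruct (LimSup_seq u); simpl in *; auto.
Qed.

Lemma LimInf_gt_0_iff (u : nat -> R) :
  Rbar_lt 0 (LimInf_seq u) <-> exists m, 0 < m /\ eventually (fun n => m <= u n).
Proof.
  split.
  - destruct (ex_LimInf_seq u) as [l Hl]. rewrite (is_LimInf_seq_unique _ _ Hl).
    destruct l as [l| |]; simpl; intros H; try contradiction.
    + assert (Hl2 : 0 < l / 2) by lra.
      destruct (Hl (mkposreal _ Hl2)) as [_ [n0 Hn0]]. exists (l / 2). split; [lra|].
      exists n0. intros n Hn. specialize (Hn0 n Hn). simpl in Hn0. lra.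
    + destruct (Hl 1) as [n0 Hn0]. exists 1. split; [lra|].
      exists n0. intros n Hn. specialize (Hn0 n Hn). lra.
  - intros [m [Hm HM]]. pose proof (LimInf_le (fun _ => m) u HM) as H.
    rewrite LimInf_seq_const in H. destruct (LimInf_seq u); simpl in *; auto; lra.
Qed.

Lemma LimSup_lt_p_infty_le_scal (u v : nat -> R) K : 0 <= K ->
  (forall n, u n <= K * v n) ->
  Rbar_lt (LimSup_seq v) p_infty -> Rbar_lt (LimSup_seq u) p_infty.
Proof.
  intros HK Huv. rewrite !LimSup_lt_p_infty_iff. intros [M [n0 Hn0]].
  exists (K * M), n0. intros n Hn. specialize (Hn0 n Hn). specialize (Huv n). nra.
Qed.

Lemma LimSup_lt_p_infty_comparable (u v : nat -> R) K : 0 <= K ->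
  (forall n, u n <= K * v n) -> (forall n, v n <= K * u n) ->
  Rbar_lt (LimSup_seq u) p_infty <-> Rbar_lt (LimSup_seq v) p_infty.
Proof. split; apply LimSup_lt_p_infty_le_scal with K; auto. Qed.

Lemma ub_of_eventually_ub (u : nat -> R) :
  (exists M, eventually (fun n => u n <= M)) -> exists C, forall n, u n <= C.
Proof.
  intros [M [n0 Hn0]].
  assert (Hinit : exists C, forall n, (n < n0)%nat -> u n <= C).
  { clear Hn0. induction n0 as [|n0 [C HC]]; [exists 0; intros; lia|].
    exists (Rmax C (u n0)). intros n Hn. destruct (Nat.eq_dec n n0) as [->|Hne].
    - apply Rmax_r.
    - apply Rle_trans with C; [apply HC; lia|apply Rmax_l]. }
  destruct Hinit as [C HC]. exists (Rmax C M). intros n.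
  destruct (Nat.lt_ge_cases n n0) as [Hn|Hn].
  - apply Rle_trans with C; [apply HC, Hn|apply Rmax_l].
  - apply Rle_trans with M; [apply Hn0, Hn|apply Rmax_r].
Qed.

Lemma Rdiv_le_scal_Rdiv p q r s K : 0 < q -> 0 < s ->
  p * s <= K * (r * q) -> p / q <= K * (r / s).
Proof.
  intros Hq Hs H. apply Rmult_le_reg_r with (q * s); [nra|].
  replace (p / q * (q * s)) with (p * s) by (field; lra).
  replace (K * (r / s) * (q * s)) with (K * (r * q)) by (field; lra). exact H.
Qed.

Section BalancedCharacterization.
Context {a b : R} {N : nat -> nat} {t : nat -> nat -> R}.
Hypothesis Hp : forall n, is_partition a b (N n) (t n).

Lemma balanced_mesh_le : balanced N t ->
  exists c, 0 < c /\ forall n, mesh (N n) (t n) <= c * minstep (N n) (t n).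
Proof.
  intros [c [Hc Hb]]. exists c. split; [exact Hc|]. intros n.
  apply Rle_div_l; [exact (minstep_pos (Hp n))|]. apply Hb.
Qed.

Lemma balanced_of_eventually_mesh_le C :
  eventually (fun n => mesh (N n) (t n) <= C * minstep (N n) (t n)) -> balanced N t.
Proof.
  intros Hev. destruct (ub_of_eventually_ub (fun n => mesh (N n) (t n) / minstep (N n) (t n)))
    as [C' HC'].
  { exists C. destruct Hev as [n0 Hn0]. exists n0. intros n Hn.
    apply Rle_div_l; [exact (minstep_pos (Hp n))|]. apply Hn0, Hn. }
  exists (Rmax 1 C'). split; [apply Rlt_le_trans with 1; [lra|apply Rmax_l]|].
  intros n. apply Rle_trans with C'; [apply HC'|apply Rmax_r].
Qed.

End BalancedCharacterization.

Section Balanced.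
Variables (T : R) (N : nat -> nat) (t : nat -> nat -> R).
Hypothesis HT : 0 < T.
Hypothesis Hp : forall n, is_partition 0 T (N n) (t n).

Lemma scaled_length_bounds c n : 0 < c -> mesh (N n) (t n) <= c * minstep (N n) (t n) ->
  T <= INR (N n) * mesh (N n) (t n) <= c * T /\
  T <= c * (INR (N n) * minstep (N n) (t n)) <= c * T.
Proof.
  intros Hc Hmc. pose proof (partition_length_bounds (Hp n)) as Hlen.
  pose proof (pos_INR (N n)). nra.
Qed.

Lemma balanced_iff_LimInf_LimSup : balanced N t <->
  Rbar_lt 0 (LimInf_seq (fun n => INR (N n) * minstep (N n) (t n))) /\
  Rbar_lt (LimSup_seq (fun n => INR (N n) * mesh (N n) (t n))) p_infty.
Proof.
  split.
  - intros Hb. destruct (balanced_mesh_le Hp Hb) as [c [Hc Hmc]].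
    split; [apply LimInf_gt_0_iff; exists (T / c); split; [apply Rdiv_lt_0_compat; lra|]
           |apply LimSup_lt_p_infty_iff; exists (c * T)];
      exists 0%nat; intros n _; destruct (scaled_length_bounds c n Hc (Hmc n)); [|lra].
    apply Rle_div_l; lra.
  - rewrite LimInf_gt_0_iff, LimSup_lt_p_infty_iff.
    intros [[m [Hm [n1 Hn1]]] [M [n2 Hn2]]].
    apply (balanced_of_eventually_mesh_le Hp (M / m)). exists (n1 + n2)%nat. intros n Hn.
    specialize (Hn1 n ltac:(lia)). specialize (Hn2 n ltac:(lia)).
    pose proof (minstep_pos (Hp n)). pose proof (mesh_pos (Hp n)).
    replace (M / m * _) with (M * minstep (N n) (t n) / m) by (field; lra).
    apply Rle_div_r; [exact Hm|].
    apply Rle_trans with (mesh (N n) (t n) * (INR (N n) * minstep (N n) (t n))); nra.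
Qed.

Lemma balanced_window_ratio_bounded : is_lim_seq (fun n => mesh (N n) (t n)) 0 ->
  balanced N t -> forall h, 0 < h <= T ->
  Rbar_lt (LimSup_seq (fun n => sup_window T h (N n) (t n) / inf_window T h (N n) (t n)))
          p_infty.
Proof.
  intros Hlim Hb h Hh. destruct (balanced_mesh_le Hp Hb) as [c [Hc Hmc]].
  apply is_lim_seq_spec in Hlim.
  destruct (Hlim (mkposreal (h / 2) ltac:(lra))) as [n0 Hn0].
  apply LimSup_lt_p_infty_iff. exists (2 * c + 1), n0. intros n Hn.
  specialize (Hn0 n Hn). simpl in Hn0. rewrite Rminus_0_r in Hn0.
  pose proof (mesh_pos (Hp n)) as Hx. pose proof (minstep_pos (Hp n)) as Hy.
  rewrite Rabs_pos_eq in Hn0 by lra.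
  pose proof (sup_window_le T h (N n) (t n) (Hp n) Hh) as HS.
  pose proof (inf_window_ge T h (N n) (t n) (Hp n) Hh) as HI.
  specialize (Hmc n).
  set (x := mesh (N n) (t n)) in *. set (y := minstep (N n) (t n)) in *.
  (* once [mesh <= h / 2], the window count is at least [h / (2 mesh)] *)
  assert (Hu : 2 <= h / x) by (apply Rle_div_r; lra).
  assert (Hv : h / y <= c * (h / x)) by (apply Rdiv_le_scal_Rdiv; nra).
  apply Rle_div_l; nra.
Qed.

Lemma balanced_refinement_ratios : balanced N t ->
  (Rbar_lt (LimSup_seq (fun n => INR (N (S n)) / INR (N n))) p_infty <->
   Rbar_lt (LimSup_seq (fun n => mesh (N n) (t n) / mesh (N (S n)) (t (S n)))) p_infty) /\
  (Rbar_lt (LimSup_seq (fun n => mesh (N n) (t n) / mesh (N (S n)) (t (S n)))) p_infty <->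
   Rbar_lt (LimSup_seq (fun n => minstep (N n) (t n) / minstep (N (S n)) (t (S n)))) p_infty).
Proof.
  intros Hb. destruct (balanced_mesh_le Hp Hb) as [c [Hc Hmc]].
  set (X := fun n => INR (N (S n)) / INR (N n)).
  set (Y := fun n => mesh (N n) (t n) / mesh (N (S n)) (t (S n))).
  set (Z := fun n => minstep (N n) (t n) / minstep (N (S n)) (t (S n))).
  assert (HXYZ : forall n, Y n <= c * X n /\ X n <= c * Y n /\ Z n <= c * X n /\ X n <= c * Z n).
  { intros n. unfold X, Y, Z.
    destruct (scaled_length_bounds c n Hc (Hmc n)).
    destruct (scaled_length_bounds c (S n) Hc (Hmc (S n))).
    pose proof (lt_0_INR _ (proj1 (Hp n))). pose proof (lt_0_INR _ (proj1 (Hp (S n)))).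
    pose proof (mesh_pos (Hp n)). pose proof (mesh_pos (Hp (S n))).
    pose proof (minstep_pos (Hp n)). pose proof (minstep_pos (Hp (S n))).
    repeat split; apply Rdiv_le_scal_Rdiv; nra. }
  split.
  - apply (LimSup_lt_p_infty_comparable X Y c); [lra|apply HXYZ|apply HXYZ].
  - apply (LimSup_lt_p_infty_comparable Y Z (c * c)); [nra| |]; intros n;
      destruct (HXYZ n) as (H1 & H2 & H3 & H4); nra.
Qed.

End Balanced.

(* [MVT_gen] needs a function on all of [R]: clamping the argument extends [g]
   constantly outside [[a, b]] without changing it inside. *)
Definition clamp (a b z : R) : R := Rmax a (Rmin b z).

Lemma clamp_id a b z : a <= z <= b -> clamp a b z = z.
Proof. intros Hz. unfold clamp. rewrite Rmin_right, Rmax_right; lra. Qed.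

Lemma clamp_bounds a b z : a <= b -> a <= clamp a b z <= b.
Proof. intros Hab. unfold clamp, Rmax, Rmin. destruct (Rle_dec b z), (Rle_dec a _); lra. Qed.

Lemma clamp_dist_le a b z c : a <= c <= b -> Rabs (clamp a b z - c) <= Rabs (z - c).
Proof.
  intros Hc. unfold clamp, Rmax, Rmin.
  destruct (Rle_dec b z), (Rle_dec a _); unfold Rabs; repeat destruct Rcase_abs; lra.
Qed.

Lemma filterlim_clamp a b z : a <= z <= b ->
  filterlim (clamp a b) (locally z) (within (fun y => a <= y <= b) (locally z)).
Proof.
  intros Hz P [d Hd]. exists d. intros y Hy. apply Hd; [|apply clamp_bounds; lra].
  change (Rabs (clamp a b y - z) < d). change (Rabs (y - z) < d) in Hy.
  pose proof (clamp_dist_le a b y z Hz). lra.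
Qed.

Section C1.
Context {a b : R} {g g' : R -> R}.
Hypothesis Hab : a <= b.
Hypothesis HC : C1_on_with a b g g'.

Lemma C1_continuous_within x : a <= x <= b ->
  filterlim g (within (fun y => a <= y <= b) (locally x)) (locally (g x)).
Proof.
  intros Hx P HP.
  (* away from [x], [g y = g x + q y * (y - x)] with [q y -> g' x] and [y - x -> 0] *)
  assert (Hlim : filterlim (fun y => g x + (g y - g x) / (y - x) * (y - x))
            (within (fun y => a <= y <= b /\ y <> x) (locally x)) (locally (g x + g' x * 0))).
  { eapply filterlim_comp_2;
      [apply filterlim_const| |exact (filterlim_plus (V := R_NormedModule) (g x) (g' x * 0))].
    eapply filterlim_comp_2;
      [exact (proj1 HC x Hx)| |exact (filterlim_mult (K := R_AbsRing) (g' x) 0)].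
    eapply filterlim_filter_le_1; [apply filter_le_within|].
    intros Q [e He]. exists e. intros y Hy. apply He.
    change (Rabs (y - x - 0) < e). rewrite Rminus_0_r. exact Hy. }
  rewrite Rmult_0_r, Rplus_0_r in Hlim.
  destruct (Hlim P HP) as [d Hd]. exists d. intros y Hy HyI.
  destruct (Req_dec y x) as [->|Hne]; [exact (locally_singleton _ _ HP)|].
  specialize (Hd y Hy (conj HyI Hne)).
  replace (g x + (g y - g x) / (y - x) * (y - x)) with (g y) in Hd by (field; lra).
  exact Hd.
Qed.

Lemma C1_clamp_continuous x : a <= x <= b -> continuity_pt (fun y => g (clamp a b y)) x.
Proof.
  intros Hx. apply continuity_pt_filterlim. rewrite (clamp_id a b x Hx).
  eapply filterlim_comp; [apply filterlim_clamp, Hx|apply C1_continuous_within, Hx].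
Qed.

Lemma C1_clamp_is_derive x : a < x < b -> is_derive (fun y => g (clamp a b y)) x (g' x).
Proof.
  intros Hx. apply is_derive_Reals. intros eps Heps.
  pose proof (proj1 HC x ltac:(lra)) as Hq.
  apply filterlim_locally with (eps := mkposreal eps Heps) in Hq as [d Hd].
  assert (Hdel : 0 < Rmin d (Rmin (x - a) (b - x))).
  { apply Rmin_glb_lt; [apply cond_pos|apply Rmin_glb_lt; lra]. }
  exists (mkposreal _ Hdel). intros h Hh0 Hh. simpl in Hh.
  pose proof (Rmin_l d (Rmin (x - a) (b - x))). pose proof (Rmin_r d (Rmin (x - a) (b - x))).
  pose proof (Rmin_l (x - a) (b - x)). pose proof (Rmin_r (x - a) (b - x)).
  apply Rabs_def2 in Hh as Hhb.
  rewrite (clamp_id a b (x + h)), (clamp_id a b x) by lra.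
  specialize (Hd (x + h)). replace (x + h - x) with h in Hd by ring.
  apply Hd; [change (Rabs (x + h - x) < d); replace (x + h - x) with h by ring; lra|lra].
Qed.

Lemma C1_derivative_bounded_above : exists M, forall x, a <= x <= b -> g' x <= M.
Proof.
  assert (Hcont : forall x, a <= x <= b -> continuity_pt (fun y => g' (clamp a b y)) x).
  { intros x Hx. apply continuity_pt_filterlim. rewrite (clamp_id a b x Hx).
    eapply filterlim_comp; [apply filterlim_clamp, Hx|apply (proj2 HC x Hx)]. }
  destruct (continuity_ab_maj _ a b Hab Hcont) as [xM [HM _]].
  exists (g' (clamp a b xM)). intros x Hx. specialize (HM x Hx).
  rewrite (clamp_id a b x Hx) in HM. exact HM.
Qed.

Lemma C1_MVT x y : a <= x -> x < y -> y <= b ->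
  exists c, x <= c <= y /\ g y - g x = g' c * (y - x).
Proof.
  intros Hx Hxy Hy.
  destruct (MVT_gen (fun z => g (clamp a b z)) x y g') as [c [Hc Heq]];
    rewrite ?Rmin_left, ?Rmax_right in * by lra.
  - intros z Hz. apply C1_clamp_is_derive. lra.
  - intros z Hz. apply C1_clamp_continuous. lra.
  - exists c. split; [exact Hc|]. rewrite !clamp_id in Heq by lra. exact Heq.
Qed.

End C1.

Lemma Glb_Rbar_pos_lb (E : R -> Prop) y0 : E y0 -> Rbar_lt 0 (Glb_Rbar E) ->
  exists m, 0 < m /\ forall y, E y -> m <= y.
Proof.
  intros Hy0 Hpos. destruct (Glb_Rbar_correct E) as [Hlb _].
  pose proof (Hlb y0 Hy0) as Hle.
  destruct (Glb_Rbar E) as [m| |]; simpl in *; try contradiction.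
  exists m. split; [exact Hpos|]. intros y Hy. exact (Hlb y Hy).
Qed.

Lemma balanced_of_comparable_gaps {a b a' b' : R} (N : nat -> nat) (t s : nat -> nat -> R) m M :
  (forall n, is_partition a b (N n) (t n)) -> (forall n, is_partition a' b' (N n) (s n)) ->
  0 < m -> 0 <= M ->
  (forall n i, (i < N n)%nat ->
     m * (t n (S i) - t n i) <= s n (S i) - s n i <= M * (t n (S i) - t n i)) ->
  balanced N t -> balanced N s.
Proof.
  intros Ht Hs Hm HM Hgap Hb. destruct (balanced_mesh_le Ht Hb) as [c [Hc Hmc]].
  apply (balanced_of_eventually_mesh_le Hs (M * c / m)). exists 0%nat. intros n _.
  pose proof (mesh_le_scal (Ht n) (s n) M HM (fun i Hi => proj2 (Hgap n i Hi))) as Hmesh.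
  pose proof (minstep_ge_scal (Ht n) (s n) m (Rlt_le _ _ Hm) (fun i Hi => proj1 (Hgap n i Hi)))
    as Hminstep.
  specialize (Hmc n).
  replace (M * c / m * _) with (M * c * minstep (N n) (s n) / m) by (field; lra).
  apply Rle_div_r; [exact Hm|].
  apply Rle_trans with (M * m * mesh (N n) (t n)); [nra|].
  apply Rle_trans with (M * c * (m * minstep (N n) (t n))); [|apply Rmult_le_compat_l; nra].
  replace (M * c * (m * _)) with (M * m * (c * minstep (N n) (t n))) by ring.
  apply Rmult_le_compat_l; nra.
Qed.

Lemma balanced_image_C1 (T : R) (N : nat -> nat) (t : nat -> nat -> R) (g : R -> R) :
  T > 0 -> (forall n, is_partition 0 T (N n) (t n)) ->
  (exists g' : R -> R, C1_on_with 0 T g g' /\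
     Rbar_lt 0 (Glb_Rbar (fun y => exists x, 0 <= x <= T /\ y = g' x))) ->
  (forall x y, 0 <= x <= T -> 0 <= y <= T -> x < y -> g x < g y) ->
  balanced N t ->
  (forall n, is_partition (g 0) (g T) (N n) (fun i => g (t n i))) /\
  balanced N (fun n i => g (t n i)).
Proof.
  intros HT Hp [g' [HC Hglb]] Hinc Hb.
  assert (Himg : forall n, is_partition (g 0) (g T) (N n) (fun i => g (t n i)))
    by (intros n; apply (is_partition_image (Hp n)), Hinc).
  split; [exact Himg|].
  assert (Hg'0 : exists x, 0 <= x <= T /\ g' 0 = g' x) by (exists 0; split; [lra|reflexivity]).
  destruct (Glb_Rbar_pos_lb _ _ Hg'0 Hglb) as [m [Hm Hmg]].
  destruct (C1_derivative_bounded_above (Rlt_le _ _ HT) HC) as [M HM].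
  assert (HM_nonneg : 0 <= M) by (specialize (Hmg _ Hg'0); specialize (HM 0 ltac:(lra)); lra).
  apply (balanced_of_comparable_gaps N t _ m M Hp Himg Hm HM_nonneg); [|exact Hb].
  intros n i Hi.
  pose proof (partition_point_bounds (Hp n) i ltac:(lia)).
  pose proof (partition_point_bounds (Hp n) (S i) ltac:(lia)).
  pose proof (proj2 (proj2 (proj2 (Hp n))) i Hi).
  destruct (C1_MVT HC (t n i) (t n (S i))) as [c [Hc ->]]; try lra.
  specialize (HM c ltac:(lra)). specialize (Hmg (g' c) ltac:(exists c; split; [lra|reflexivity])).
  split; nra.
Qed.

Theorem proposition2p2 (T : R) (N : nat -> nat) (t : nat -> nat -> R) :
  T > 0 ->
  (forall n, is_partition 0 T (N n) (t n)) ->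
  is_lim_seq (fun n => mesh (N n) (t n)) 0 ->
  (* (i) *)
  (balanced N t <->
     (Rbar_lt 0 (LimInf_seq (fun n => INR (N n) * minstep (N n) (t n))) /\
      Rbar_lt (LimSup_seq (fun n => INR (N n) * mesh (N n) (t n))) p_infty))
  /\
  (* (ii) *)
  (balanced N t -> forall h, 0 < h <= T ->
     Rbar_lt (LimSup_seq (fun n => sup_window T h (N n) (t n) / inf_window T h (N n) (t n)))
             p_infty)
  /\
  (* (iii) *)
  (balanced N t ->
     (Rbar_lt (LimSup_seq (fun n => INR (N (S n)) / INR (N n))) p_infty <->
      Rbar_lt (LimSup_seq (fun n => mesh (N n) (t n) / mesh (N (S n)) (t (S n)))) p_infty)
     /\
     (Rbar_lt (LimSup_seq (fun n => mesh (N n) (t n) / mesh (N (S n)) (t (S n)))) p_infty <->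
      Rbar_lt (LimSup_seq (fun n => minstep (N n) (t n) / minstep (N (S n)) (t (S n)))) p_infty))
  /\
  (* (iv) *)
  (forall g : R -> R,
     (exists g' : R -> R, C1_on_with 0 T g g' /\
        Rbar_lt 0 (Glb_Rbar (fun y => exists x, 0 <= x <= T /\ y = g' x))) ->
     (forall x y, 0 <= x <= T -> 0 <= y <= T -> x < y -> g x < g y) ->
     balanced N t ->
     (forall n, is_partition (g 0) (g T) (N n) (fun i => g (t n i))) /\
     balanced N (fun n i => g (t n i))).
Proof.
  intros HT Hp Hlim.
  split; [exact (balanced_iff_LimInf_LimSup T N t HT Hp)|].
  split; [exact (balanced_window_ratio_bounded T N t Hp Hlim)|].
  split; [exact (balanced_refinement_ratios T N t HT Hp)|].
  intros g Hg Hinc Hb. exact (balanced_image_C1 T N t g HT Hp Hg Hinc Hb).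
Qed.
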